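(* Let $L/K$ be a quadratic extension of local fields and let $\lambda\subseteq\mathbb A=\mathbb M_2(K)$ be a subalgebra isomorphic to $L$, with ring of integers $\mathcal O_\lambda$ and a uniformizer $\boldsymbol\pi_\lambda$ of $\mathcal O_\lambda$. Let $\mathcal B$ be a full order of $\mathbb A$ containing $\mathcal O_\lambda$. Then every full order $\mathcal B'\subseteq\mathcal B$ with $\mathcal O_\lambda\subseteq\mathcal B'$ has the form $\mathcal B'=\mathcal O_\lambda+\boldsymbol\pi_\lambda^r\mathcal B$ for some integer $r\ge0$.
   Context: $K$ is a non-archimedean local field with ring of integers $\mathcal O_K$. An order of $\mathbb A$ is a subring containing the identity which is a finitely generated $\mathcal O_K$-submodule; full if it spans $\mathbb A$ over $K$. A uniformizer of $\mathcal O_\lambda$ is a generator of its maximal ideal. *)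

From HB Require Import structures.
From mathcomp Require Import all_boot all_order all_algebra.
Set Implicit Arguments. Unset Strict Implicit. Unset Printing Implicit Defensive.
Import Order.TTheory GRing.Theory Num.Theory.
Local Open Scope ring_scope.

(** * Non-archimedean local fields, presented through a normalized discrete
    valuation [v : K -> int] (the value [v 0] is irrelevant: all axioms only
    look at nonzero elements; conventionally v 0 = +oo). *)

Definition discrete_valuation (K : fieldType) (v : K -> int) : Prop :=
  [/\ (forall x y : K, x != 0 -> y != 0 -> v (x * y) = v x + v y),
      (forall x y : K, x != 0 -> y != 0 -> x + y != 0 ->
           Num.min (v x) (v y) <= v (x + y)) &
      (exists x : K, x != 0 /\ v x = 1)].

Definition vclose (K : fieldType) (v : K -> int) (n : int) (x y : K) : Prop :=
  x - y = 0 \/ n <= v (x - y).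

Definition vcauchy (K : fieldType) (v : K -> int) (u : nat -> K) : Prop :=
  forall n : int, exists N : nat, forall m k : nat,
    (N <= m)%N -> (N <= k)%N -> vclose v n (u m) (u k).

Definition vconverges (K : fieldType) (v : K -> int) (u : nat -> K) (l : K) : Prop :=
  forall n : int, exists N : nat, forall m : nat, (N <= m)%N -> vclose v n (u m) l.

Definition vcomplete (K : fieldType) (v : K -> int) : Prop :=
  forall u : nat -> K, vcauchy v u -> exists l, vconverges v u l.

Definition ring_of_integers (K : fieldType) (v : K -> int) (x : K) : Prop :=
  x = 0 \/ 0 <= v x.

(** Finite residue field: finitely many classes of O_K modulo the maximal
    ideal {x | v x >= 1}. *)
Definition finite_residue_field (K : fieldType) (v : K -> int) : Prop :=
  exists s : seq K, (forall y, y \in s -> ring_of_integers v y) /\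
    forall x, ring_of_integers v x -> exists2 y, y \in s & vclose v 1 x y.

Definition nonarch_local_field (K : fieldType) (v : K -> int) : Prop :=
  [/\ discrete_valuation v, vcomplete v & finite_residue_field v].

Notation mxset K := ('M[K]_2 -> Prop).

(** [lam] is a K-subalgebra of M_2(K) which is a field of K-dimension 2,
    i.e. a subalgebra isomorphic to a quadratic extension L of K. *)
Definition quadratic_subfield (K : fieldType) (lam : mxset K) : Prop :=
  lam 1%:M /\
  [/\ (forall x y, lam x -> lam y -> lam (x + y)),
      (forall x y, lam x -> lam y -> lam (x * y)),
      (forall (a : K) x, lam x -> lam (a *: x)),
      (forall x, lam x -> x != 0 -> x \in unitmx /\ lam (invmx x)) &
      (exists e1 e2, [/\ lam e1, lam e2,
          (forall a b : K, a *: e1 + b *: e2 = 0 -> a = 0 /\ b = 0) &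
          (forall x, lam x -> exists a b : K, x = a *: e1 + b *: e2)])].

(** Ring of integers of lam: the elements of lam integral over O_K. *)
Definition int_closure (K : fieldType) (v : K -> int) (lam : mxset K) : mxset K :=
  fun x => lam x /\ exists p : {poly K},
    [/\ p \is monic, (forall i, ring_of_integers v p`_i) & horner_mx x p = 0].

Definition is_ideal (K : fieldType) (R I : mxset K) : Prop :=
  [/\ (forall x, I x -> R x), I 0,
      (forall x y, I x -> I y -> I (x - y)) &
      (forall x y, I x -> R y -> I (y * x) /\ I (x * y))].

Definition is_maximal_ideal (K : fieldType) (R I : mxset K) : Prop :=
  is_ideal R I /\ ~ I 1%:M /\
  forall J, is_ideal R J -> (forall x, I x -> J x) ->
    (forall x, J x <-> I x) \/ J 1%:M.

Definition uniformizer (K : fieldType) (R : mxset K) (pi : 'M[K]_2) : Prop :=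
  R pi /\ is_maximal_ideal R (fun x => exists2 y, R y & x = pi * y).

Definition is_order (K : fieldType) (v : K -> int) (B : mxset K) : Prop :=
  [/\ B 1%:M,
      (forall x y, B x -> B y -> B (x + y) /\ B (x * y) /\ B (- x)),
      (forall a x, ring_of_integers v a -> B x -> B (a *: x)) &
      (exists s : seq 'M[K]_2, (forall g, g \in s -> B g) /\
         forall x, B x -> exists c : nat -> K,
           (forall i, ring_of_integers v (c i)) /\
           x = \sum_(i < size s) c i *: s`_i)].

Definition is_full_order (K : fieldType) (v : K -> int) (B : mxset K) : Prop :=
  is_order v B /\
  forall x : 'M[K]_2, exists s : seq 'M[K]_2, (forall g, g \in s -> B g) /\
    exists c : nat -> K, x = \sum_(i < size s) c i *: s`_i.

From HB Require Import structures.
From mathcomp Require Import all_boot all_order all_algebra.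
From mathcomp Require Import ring zify.
From Stdlib Require Import Classical.
Import Order.TTheory GRing.Theory Num.Theory.
Local Open Scope ring_scope.
Set Implicit Arguments. Unset Strict Implicit.

(* For [x] in the quadratic subfield [lam], [v (det x)] is a valuation: the
   ultrametric inequality reduces, through [x + y = x * (1 + x^-1 * y)], to the
   integrality of the trace of an integral [t], and if [v (tr t) < 0 <= v (det t)]
   Hensel's lemma would split the characteristic polynomial of [t] inside the
   field [lam].  So [O_lam] is a discrete valuation ring with uniformizer [pi].
   Fix [u] outside [lam], so that [M_2(K) = lam + lam u].  For an order [C]
   containing [O_lam], the second coordinates of the elements of [C] form an
   [O_lam]-submodule [J(C)] of [lam], nonzero when [C] is full and bounded below
   because [C] is finitely generated; it is therefore principal.  Comparing
   generators gives [J(B') = pi^r J(B)], and the first coordinates are then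
   matched by elements of [lam] lying in [B], which are integral since their
   powers stay in the finitely generated [B]. *)

Section Valuation.
Variables (K : fieldType) (v : K -> int).
Hypothesis hv : discrete_valuation v.

(* [vge n x] means v x >= n with the convention v 0 = +oo; [ring_of_integers v]
   is [vge 0] and [vclose v n x y] is [vge n (x - y)], both by conversion. *)
Definition vge (n : int) (x : K) := x = 0 \/ n <= v x.

Lemma valuationM x y : x != 0 -> y != 0 -> v (x * y) = v x + v y.
Proof. by case: hv => H _ _; apply: H. Qed.

Lemma valuation_ultra x y : x != 0 -> y != 0 -> x + y != 0 ->
  Num.min (v x) (v y) <= v (x + y).
Proof. by case: hv => _ H _; apply: H. Qed.

Lemma valuation1 : v 1 = 0.
Proof. by have := @valuationM 1 1 (oner_neq0 K) (oner_neq0 K); rewrite mulr1; lia. Qed.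

Lemma valuationN x : v (- x) = v x.
Proof.
have [->|x0] := eqVneq x 0; first by rewrite oppr0.
have N1 : (-1 : K) != 0 by rewrite oppr_eq0 oner_neq0.
have vN1 : v (-1) = 0 by have := valuationM N1 N1; rewrite mulrNN mulr1 valuation1; lia.
by rewrite -mulN1r valuationM // vN1 add0r.
Qed.

Lemma valuationV x : x != 0 -> v x^-1 = - v x.
Proof.
by move=> x0; have := valuationM x0 (invr_neq0 x0); rewrite mulfV // valuation1; lia.
Qed.

Lemma vge_val x : vge (v x) x. Proof. by right. Qed.

Lemma vge_le m n x : m <= n -> vge n x -> vge m x.
Proof. by move=> mn [->|h]; [left | right; apply: le_trans h]. Qed.

Lemma vgeD n x y : vge n x -> vge n y -> vge n (x + y).
Proof.
have [->|x0] := eqVneq x 0; first by rewrite add0r.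
have [->|y0] := eqVneq y 0; first by rewrite addr0.
have [->|xy0] := eqVneq (x + y) 0; first by left.
move=> [/eqP|hx]; first by rewrite (negPf x0).
move=> [/eqP|hy]; first by rewrite (negPf y0).
by right; apply: le_trans (valuation_ultra x0 y0 xy0); rewrite le_min hx hy.
Qed.

Lemma vgeN n x : vge n x -> vge n (- x).
Proof. by move=> [->|h]; [left; rewrite oppr0 | right; rewrite valuationN]. Qed.

Lemma vgeB n x y : vge n x -> vge n y -> vge n (x - y).
Proof. by move=> hx hy; apply: vgeD hx (vgeN hy). Qed.

Lemma vgeM m n x y : vge m x -> vge n y -> vge (m + n) (x * y).
Proof.
have [->|x0] := eqVneq x 0; first by rewrite mul0r; left.
have [->|y0] := eqVneq y 0; first by rewrite mulr0; left.
move=> [/eqP|hx]; first by rewrite (negPf x0).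
move=> [/eqP|hy]; first by rewrite (negPf y0).
by right; rewrite valuationM // lerD.
Qed.

Lemma vge_all_eq0 x : (forall n, vge n x) -> x = 0.
Proof. by move=> h; case: (h (v x + 1)) => // /[dup]; lia. Qed.

Lemma val_subr_small a y : a != 0 -> vge (v a + 1) y -> a - y != 0 /\ v (a - y) = v a.
Proof.
move=> a0 vy.
have ay0 : a - y != 0.
  by rewrite subr_eq0; apply/eqP => ay; case: vy; rewrite -ay; [apply/eqP | lia].
have : vge (v a) (a - y) by apply: vgeB (vge_val a) (vge_le _ vy); lia.
case=> [/eqP|le_ay]; first by rewrite (negPf ay0).
have : vge (Num.min (v (a - y)) (v a + 1)) (a - y + y).
  by apply: vgeD; [apply: vge_le (vge_val _) | apply: vge_le vy]; rewrite ge_min lexx ?orbT.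
rewrite subrK; case=> [/eqP|]; first by rewrite (negPf a0).
by rewrite ge_min => /orP [|]; split=> //; lia.
Qed.

(* Hensel's lemma for [y * (a - y) = b] with [v a < 0 <= v b]: the map
   [y |-> b / (a - y)] preserves the integers and raises the valuation of
   differences by [v b - 2 v a >= 2]. *)
Section QuadraticRoot.
Variables a b : K.
Hypotheses (a0 : a != 0) (va : v a < 0) (vb : vge 0 b).

Fixpoint root_seq (n : nat) : K :=
  if n is k.+1 then b / (a - root_seq k) else 0.

Lemma root_seq_int n : vge 0 (root_seq n).
Proof.
elim: n => [|n IH]; first by left.
have [d0 vden] := val_subr_small a0 (@vge_le (v a + 1) 0 _ ltac:(lia) IH).
apply: (@vge_le 0 (0 + - v a)); first by lia.
by apply: vgeM vb _; rewrite -vden -valuationV //; apply: vge_val.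
Qed.

Lemma root_seq_denom n : a - root_seq n != 0 /\ v (a - root_seq n) = v a.
Proof. by apply: val_subr_small a0 (vge_le _ (root_seq_int n)); lia. Qed.

Lemma root_seq_step (n : nat) : vge n (root_seq n.+1 - root_seq n).
Proof.
elim: n => [|n IH]; first by rewrite subr0; apply: root_seq_int.
have [d0 vd0] := root_seq_denom n; have [d1 vd1] := root_seq_denom n.+1.
have -> : root_seq n.+2 - root_seq n.+1 = b * (root_seq n.+1 - root_seq n)
    * ((a - root_seq n.+1) * (a - root_seq n))^-1.
  change (b / (a - root_seq n.+1) - b / (a - root_seq n) = b * (root_seq n.+1 - root_seq n)
    * ((a - root_seq n.+1) * (a - root_seq n))^-1).
  by move: (root_seq n.+1) (root_seq n) d1 d0 => r1 r0 d1 d0; field; rewrite d1 d0.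
have vinv : vge (- (v a + v a)) (((a - root_seq n.+1) * (a - root_seq n))^-1).
  by rewrite -{1}vd1 -vd0 -valuationM // -valuationV ?mulf_neq0 //; apply: vge_val.
apply: (@vge_le _ (0 + n%:Z + - (v a + v a))); first by lia.
exact: vgeM (vgeM vb IH) vinv.
Qed.

Lemma root_seq_tail (N j : nat) : vge N (root_seq (N + j) - root_seq N).
Proof.
elim: j => [|j IH]; first by rewrite addn0 subrr; left.
rewrite addnS -[root_seq _.+1](subrK (root_seq (N + j))) -addrA.
by apply: vgeD IH; apply: vge_le (root_seq_step _); lia.
Qed.

Lemma root_seq_cauchy : vcauchy v root_seq.
Proof.
move=> n; exists `|n|%N => m k hm hk.
have tail j : (`|n| <= j)%N -> vge n (root_seq j - root_seq `|n|).
  by move/subnKC <-; apply: vge_le (root_seq_tail _ _); lia.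
change (vge n (root_seq m - root_seq k)); rewrite -(subrKA (root_seq `|n|)).
by apply: vgeD (tail m hm) _; rewrite -opprB; apply/vgeN/tail.
Qed.

Lemma quadratic_root : vcomplete v -> exists y, y * (a - y) = b.
Proof.
move=> /(_ _ root_seq_cauchy) [y conv]; exists y.
apply/eqP; rewrite -subr_eq0; apply/eqP; apply: vge_all_eq0 => n.
pose n' : int := (`|n| + `|v a|)%N.
have [N hN] := conv n'.
have e1 : vge n' (root_seq N - y) := hN N (leqnn N).
have e2 : vge n' (root_seq N.+1 - y) := hN N.+1 (leqnSn N).
have [d0 _] := root_seq_denom N.
have vy : vge 0 y.
  rewrite -[y](subKr (root_seq N)); apply: vgeB (root_seq_int N) _.
  by apply: vge_le e1; lia.
have -> : b = root_seq N.+1 * (a - root_seq N) by rewrite /= mulfVK.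
have -> : y * (a - y) - root_seq N.+1 * (a - root_seq N) =
  - ((root_seq N.+1 - y) * (a - y)) + root_seq N.+1 * (root_seq N - y) by ring.
apply: (@vge_le _ (n' + v a)); first by lia.
apply: vgeD; first by apply/vgeN/(vgeM e2)/vgeB; [apply: vge_val | apply: vge_le vy; lia].
by apply: (@vge_le _ (0 + n')); [lia | apply: vgeM (root_seq_int _) e1].
Qed.

End QuadraticRoot.
End Valuation.

Section Matrix2.
Variable R : comNzRingType.
Implicit Types A : 'M[R]_2.

Lemma det_mx2 A : \det A = A 0 0 * A 1 1 - A 0 1 * A 1 0.
Proof.
rewrite (expand_det_row _ 0) !big_ord_recl big_ord0 /cofactor !det_mx11 !mxE /=.
have -> : lift ord0 ord0 = 1 :> 'I_2 by apply/val_inj.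
have -> : lift 1 ord0 = 0 :> 'I_2 by apply/val_inj.
by rewrite /bump /= expr0 expr1 mul1r mulN1r addr0 mulrN.
Qed.

Lemma trace_mx2 A : \tr A = A 0 0 + A 1 1.
Proof.
rewrite /mxtrace !big_ord_recl big_ord0 addr0.
by have -> : lift ord0 ord0 = 1 :> 'I_2 by apply/val_inj.
Qed.

Lemma det_1Dmx2 A : \det (1 + A) = 1 + \tr A + \det A.
Proof. by rewrite !det_mx2 trace_mx2 !mxE /=; ring. Qed.

Lemma ord2P (i : 'I_2) : i = 0 \/ i = 1.
Proof. by case: i => [[|[|//]] ?]; [left | right]; apply/val_inj. Qed.

Lemma Cayley_Hamilton_mx2 A : A * A - \tr A *: A + (\det A)%:M = 0.
Proof.
apply/matrixP => i j; rewrite det_mx2 trace_mx2 !mxE !big_ord_recl big_ord0 /=.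
have -> : lift ord0 ord0 = 1 :> 'I_2 by apply/val_inj.
by case: (ord2P i) => ->; case: (ord2P j) => ->; rewrite /= ?mulr1n ?mulr0n; ring.
Qed.

End Matrix2.

Lemma horner_mx_sum (R : comNzRingType) n (A : 'M[R]_n.+1) (p : {poly R}) :
  horner_mx A p = \sum_(i < size p) p`_i *: A ^+ i.
Proof.
rewrite -{1}(coefK p) poly_def linear_sum; apply: eq_bigr => i _.
by rewrite linearZ /= rmorphXn /= horner_mx_X.
Qed.

Lemma int_min_exists (P : int -> Prop) (n0 : int) : (exists n, P n) ->
  (forall n, P n -> n0 <= n) -> exists2 n, P n & forall m, P m -> n <= m.
Proof.
move=> [n Pn] lb; have [k] : exists k : nat, n - n0 <= k by exists `|n - n0|%N; lia.
elim: k n Pn => [|k IH] n Pn nk;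
  case: (classic (exists2 m, P m & m < n)) => [[m Pm mn]|nomin].
- by have := lb m Pm; lia.
- by exists n => // m Pm; rewrite leNgt; apply/negP => mn; apply: nomin; exists m.
- by apply: (IH m Pm); lia.
- by exists n => // m Pm; rewrite leNgt; apply/negP => mn; apply: nomin; exists m.
Qed.

Section QuadraticSubfield.
Variables (K : fieldType) (v : K -> int) (lam : 'M[K]_2 -> Prop).
Hypotheses (hv : discrete_valuation v) (hc : vcomplete v).
Hypothesis hlam : quadratic_subfield lam.

Lemma lam1 : lam 1. Proof. by case: hlam. Qed.
Lemma lamD x y : lam x -> lam y -> lam (x + y).
Proof. by case: hlam => _ [+ _ _ _ _]; apply. Qed.
Lemma lamM x y : lam x -> lam y -> lam (x * y).
Proof. by case: hlam => _ [_ + _ _ _]; apply. Qed.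
Lemma lamZ a x : lam x -> lam (a *: x). Proof. by case: hlam => _ [_ _ + _ _]; apply. Qed.
Lemma lam_unit x : lam x -> x != 0 -> x \is a GRing.unit.
Proof. by case: hlam => _ [_ _ _ + _] lx x0 => /(_ x lx x0) []. Qed.
Lemma lam_scalar c : lam c%:M. Proof. by rewrite -scalemx1; apply/lamZ/lam1. Qed.
Lemma lam0 : lam 0. Proof. by rewrite -(scale0r 1); apply/lamZ/lam1. Qed.
Lemma lamN x : lam x -> lam (- x). Proof. by rewrite -scaleN1r; apply: lamZ. Qed.
Lemma lamB x y : lam x -> lam y -> lam (x - y). Proof. by move=> lx /lamN; apply: lamD. Qed.
Lemma lamV x : lam x -> lam x^-1.
Proof.
have [->|x0] := eqVneq x 0; first by rewrite invr0.
by case: hlam => _ [_ _ _ + _] lx => /(_ x lx x0) [].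
Qed.
Lemma lamX x n : lam x -> lam (x ^+ n).
Proof.
by move=> lx; elim: n => [|n IH]; [rewrite expr0; apply: lam1 | rewrite exprS; apply: lamM].
Qed.
Lemma lam_sum I (r : seq I) (P : pred I) (F : I -> 'M[K]_2) :
  (forall i, P i -> lam (F i)) -> lam (\sum_(i <- r | P i) F i).
Proof. by move=> h; apply: big_ind => //; [apply: lam0 | apply: lamD]. Qed.

Lemma lam_generator : exists g, forall x, lam x -> exists c d : K, x = c%:M + d *: g.
Proof.
case: hlam => _ [_ _ _ _ [e1 [e2 [_ _ _ span]]]].
have [a [b e1D]] := span 1 lam1.
have [b0|b0] := eqVneq b 0.
  have a0 : a != 0.
    by apply: contra_eq_neq e1D => a0; rewrite b0 a0 !scale0r addr0 oner_neq0.
  exists e2 => x /span [c [d ->]]; exists (c / a), d.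
  by rewrite -scalemx1 -[1%:M]/1 e1D b0 scale0r addr0 scalerA mulfVK.
exists e1 => x /span [c [d ->]]; exists (d / b), (c - d / b * a).
rewrite -scalemx1 -[1%:M]/1 e1D scalerDr !scalerA addrAC -scalerDl.
by congr (_ *: _ + _ *: _); field.
Qed.

Lemma lam_comm x y : lam x -> lam y -> x * y = y * x.
Proof.
have [g hg] := lam_generator.
have lin a b : a%:M + b *: g = horner_mx g (a%:P + b *: 'X).
  by rewrite rmorphD /= linearZ /= horner_mx_C horner_mx_X.
by move=> /hg [c [d ->]] /hg [c' [d' ->]]; rewrite !lin; apply: comm_horner_mx2.
Qed.

Lemma lam_det_neq0 x : lam x -> x != 0 -> \det x != 0.
Proof. by move=> lx x0; rewrite -unitfE -unitmxE; apply: lam_unit. Qed.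

Lemma lam_mulf_neq0 x y : lam x -> lam y -> x != 0 -> y != 0 -> x * y != 0.
Proof.
move=> lx ly x0 y0; apply: contraNneq (mulf_neq0 (lam_det_neq0 lx x0) (lam_det_neq0 ly y0)).
by move=> xy; rewrite -detM xy det0.
Qed.

Lemma lam_mul_eq0 x y : lam x -> lam y -> x * y = 0 -> x = 0 \/ y = 0.
Proof.
move=> lx ly xy; have [->|x0] := eqVneq x 0; [by left | right].
have [//|y0] := eqVneq y 0.
by have := lam_mulf_neq0 lx ly x0 y0; rewrite xy eqxx.
Qed.

Lemma lam_expf_neq0 x n : lam x -> x != 0 -> x ^+ n != 0.
Proof.
move=> lx x0; elim: n => [|n IH]; first by rewrite expr0 oner_neq0.
by rewrite exprS lam_mulf_neq0 //; apply: lamX.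
Qed.

(* For [x] in [lam], [\det x] is the norm of [x] from L to K, so [mxval] is the
   normalized valuation of L multiplied by the residue degree of L/K. *)
Definition mxval (x : 'M[K]_2) := v (\det x).
Definition mxvge (n : int) (x : 'M[K]_2) := x = 0 \/ n <= mxval x.

Lemma mxvalM x y : lam x -> lam y -> x != 0 -> y != 0 -> mxval (x * y) = mxval x + mxval y.
Proof. by move=> lx ly x0 y0; rewrite /mxval detM (valuationM hv) // lam_det_neq0. Qed.

Lemma mxval1 : mxval 1 = 0.
Proof. by rewrite /mxval det1 (valuation1 hv). Qed.

Lemma mxvalN x : mxval (- x) = mxval x.
Proof. by rewrite /mxval -scaleN1r detZ sqrrN expr1n mul1r. Qed.

Lemma mxval_scalar c : c != 0 -> mxval c%:M = v c + v c.
Proof. by move=> c0; rewrite /mxval det_scalar expr2 (valuationM hv). Qed.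

Lemma mxvalV x : lam x -> x != 0 -> mxval x^-1 = - mxval x.
Proof. by move=> lx x0; rewrite /mxval detV (valuationV hv) // lam_det_neq0. Qed.

Lemma mxvalX x n : lam x -> x != 0 -> mxval (x ^+ n) = mxval x *+ n.
Proof.
move=> lx x0; elim: n => [|n IH]; first by rewrite expr0 mxval1.
by rewrite exprS mxvalM ?lam_expf_neq0 // ?IH ?mulrS //; apply: lamX.
Qed.

Lemma mxvge_le m n x : m <= n -> mxvge n x -> mxvge m x.
Proof. by move=> mn [->|h]; [left | right; apply: le_trans h]. Qed.

Lemma mxvgeN n x : mxvge n x -> mxvge n (- x).
Proof. by move=> [->|h]; [left; rewrite oppr0 | right; rewrite mxvalN]. Qed.

Lemma mxvgeM m n x y : lam x -> lam y -> mxvge m x -> mxvge n y -> mxvge (m + n) (x * y).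
Proof.
move=> lx ly; have [->|x0] := eqVneq x 0; first by rewrite mul0r; left.
have [->|y0] := eqVneq y 0; first by rewrite mulr0; left.
move=> [/eqP|hx]; first by rewrite (negPf x0).
move=> [/eqP|hy]; first by rewrite (negPf y0).
by right; rewrite mxvalM // lerD.
Qed.

Lemma mxvge_scalar c : vge v 0 c -> mxvge 0 c%:M.
Proof.
have [->|c0] := eqVneq c 0; first by left; rewrite -scalemx1 scale0r.
by case=> [/eqP|vc]; [rewrite (negPf c0) | right; rewrite mxval_scalar //; lia].
Qed.

Lemma mxvge_det n x : mxvge n x -> vge v n (\det x).
Proof. by case=> [->|]; [left; rewrite det0 | right]. Qed.

Lemma vge_trace_scalar (c : K) :
  vge v 0 (\det (c%:M : 'M_2)) -> vge v 0 (\tr (c%:M : 'M_2)).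
Proof.
rewrite det_scalar mxtrace_scalar mulr2n.
have [->|c0] := eqVneq c 0; first by rewrite addr0; left.
case=> [/eqP|vc]; first by rewrite expf_eq0 (negPf c0) andbF.
by apply: (vgeD hv) => //; right; move: vc; rewrite expr2 (valuationM hv) //; lia.
Qed.

(* If [v (tr t) < 0 <= v (det t)], the characteristic polynomial of [t] splits by
   [quadratic_root]; as [lam] is a field, [t] is then a scalar. *)
Lemma vge_trace t : lam t -> mxvge 0 t -> vge v 0 (\tr t).
Proof.
move=> lt /mxvge_det vdet.
have [->|tr0] := eqVneq (\tr t) 0; first by left.
have [vtr|vtr] := lerP 0 (v (\tr t)); first by right.
have [y yroot] := quadratic_root hv tr0 vtr vdet hc.
pose z := \tr t - y.
have fact : (t - y%:M) * (t - z%:M) = 0.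
  have trE : \tr t = y + z by rewrite /z addrC subrK.
  rewrite -(Cayley_Hamilton_mx2 t) trE -yroot -/z scalerDl scalar_mxM.
  rewrite mulrBl !mulrBr -!mulmxE mul_mx_scalar !mul_scalar_mx opprB opprD !addrA.
  by rewrite (addrAC _ (y *: z%:M)) (addrAC _ (- (z *: t))).
case: (lam_mul_eq0 (lamB lt (lam_scalar _)) (lamB lt (lam_scalar _)) fact) => /eqP;
  by rewrite subr_eq0 => /eqP tE; rewrite tE in vdet *; apply: vge_trace_scalar.
Qed.

Lemma mxval_1D_ge0 t : lam t -> 0 <= mxval t -> 1 + t != 0 -> 0 <= mxval (1 + t).
Proof.
move=> lt vt t1; rewrite /mxval det_1Dmx2.
have : vge v 0 (1 + \tr t + \det t).
  apply: (vgeD hv); last by right.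
  by apply: (vgeD hv); [right; rewrite (valuation1 hv) | apply: vge_trace => //; right].
by case=> // /eqP; rewrite -det_1Dmx2 (negPf (lam_det_neq0 (lamD lam1 lt) t1)).
Qed.

Lemma mxval_addr_ge x y : lam x -> lam y -> x != 0 -> y != 0 -> x + y != 0 ->
  mxval x <= mxval y -> mxval x <= mxval (x + y).
Proof.
move=> lx ly x0 y0 xy0 vxy; pose t := x^-1 * y.
have lt : lam t by apply: lamM (lamV lx) ly.
have t0 : t != 0 by apply: lam_mulf_neq0 (lamV lx) ly _ y0; rewrite invr_eq0.
have xyE : x + y = x * (1 + t) by rewrite mulrDr mulr1 mulVKr ?lam_unit.
have t1 : 1 + t != 0 by apply: contraNneq xy0; rewrite xyE => ->; rewrite mulr0.
have vt : mxval t = mxval y - mxval x.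
  by rewrite mxvalM ?mxvalV ?invr_eq0 //; [exact: addrC | exact: lamV].
have vt1 : 0 <= mxval (1 + t) by apply: mxval_1D_ge0; rewrite // vt subr_ge0.
by rewrite xyE mxvalM ?lerDl //; exact: lamD lam1 lt.
Qed.

Lemma mxvgeD n x y : lam x -> lam y -> mxvge n x -> mxvge n y -> mxvge n (x + y).
Proof.
move=> lx ly; have [->|x0] := eqVneq x 0; first by rewrite add0r.
have [->|y0] := eqVneq y 0; first by rewrite addr0.
have [->|xy0] := eqVneq (x + y) 0; first by left.
move=> [/eqP|hx]; first by rewrite (negPf x0).
move=> [/eqP|hy]; first by rewrite (negPf y0).
right; have [vxy|vyx] := lerP (mxval x) (mxval y).
  exact: le_trans hx (mxval_addr_ge lx ly x0 y0 xy0 vxy).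
by rewrite addrC; apply: le_trans hy (mxval_addr_ge ly lx y0 x0 _ (ltW vyx)); rewrite addrC.
Qed.

Lemma mxvge_sum n I (r : seq I) (P : pred I) (F : I -> 'M[K]_2) :
  (forall i, P i -> lam (F i) /\ mxvge n (F i)) ->
  lam (\sum_(i <- r | P i) F i) /\ mxvge n (\sum_(i <- r | P i) F i).
Proof.
move=> h; apply: (big_ind (fun z => lam z /\ mxvge n z)) => //.
  by split; [apply: lam0 | left].
by move=> a b [la ga] [lb gb]; split; [apply: lamD | apply: mxvgeD].
Qed.

Definition Olam x := lam x /\ mxvge 0 x.

Lemma Olam_val x : Olam x -> x != 0 -> 0 <= mxval x.
Proof. by move=> [_ [->|//]]; rewrite eqxx. Qed.

(* Dividing [x ^+ n = - \sum_(i < n) p_i x ^+ i] by [x ^+ n] writes [1] as a sum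
   of terms of positive valuation when [mxval x < 0]. *)
Lemma int_closure_Olam x : int_closure v lam x -> Olam x.
Proof.
move=> [lx [p [pmon pint px]]]; split => //.
have [->|x0] := eqVneq x 0; first by left.
right; rewrite leNgt; apply/negP => vx.
pose z := x^-1; have lz : lam z by apply: lamV.
have z0 : z != 0 by rewrite invr_eq0.
pose n := (size p).-1.
have zx i : z ^+ i * x ^+ i = 1.
  by rewrite -exprMn_comm ?mulVr ?expr1n ?lam_unit //; apply: lam_comm.
have xn : x ^+ n = - \sum_(i < n) p`_i *: x ^+ i.
  have sizep : size p = n.+1 by rewrite prednK // size_poly_gt0 monic_neq0.
  have pn : p`_n = 1 by move/monicP: pmon.
  move: px; rewrite horner_mx_sum sizep big_ord_recr /= pn scale1r => /eqP.
  by rewrite addr_eq0 => /eqP ->; rewrite opprK.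
have oneE : 1 = - \sum_(i < n) p`_i *: z ^+ (n - i).
  rewrite -(zx n) xn mulrN mulr_sumr; congr (- _); apply: eq_bigr => i _.
  by rewrite -scalerAr -[X in z ^+ X](subnK (ltnW (ltn_ord i))) exprD -mulrA zx mulr1.
have [_ sum_ge1] : lam (\sum_(i < n) p`_i *: z ^+ (n - i)) /\
    mxvge 1 (\sum_(i < n) p`_i *: z ^+ (n - i)).
  apply: mxvge_sum => i _; split; first by apply/lamZ/lamX.
  rewrite -mul_scalar_mx -[1]add0r; apply: mxvgeM; [exact: lam_scalar | exact: lamX |
    exact: mxvge_scalar (pint i) | right].
  rewrite mxvalX ?mxvalV //; have : (0 < n - i)%N by rewrite subn_gt0.
  by case: (n - i)%N => // k _; rewrite mulrS; lia.
have := mxvgeN sum_ge1; rewrite -oneE.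
by case=> [/eqP|]; [rewrite oner_eq0 | rewrite mxval1].
Qed.

Lemma Olam_int_closure x : Olam x -> int_closure v lam x.
Proof.
move=> [lx vx]; split => //; exists (char_poly x); split.
- exact: char_poly_monic.
- have vdet : vge v 0 (\det x) := mxvge_det vx.
  move=> [|[|[|i]]].
  + rewrite char_poly_det sqrrN expr1n mul1r //.
  + by rewrite (char_poly_trace x) //; apply/vgeN/vge_trace.
  + move: (char_poly_monic x); rewrite monicE /lead_coef size_char_poly => /eqP ->.
    by right; rewrite (valuation1 hv).
  + by left; rewrite nth_default // size_char_poly.
- exact: Cayley_Hamilton.
Qed.

Lemma int_closureE x : int_closure v lam x <-> Olam x.
Proof. by split; [apply: int_closure_Olam | apply: Olam_int_closure]. Qed.

Lemma Olam1 : Olam 1. Proof. by split; [apply: lam1 | right; rewrite mxval1]. Qed.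
Lemma Olam0 : Olam 0. Proof. by split; [apply: lam0 | left]. Qed.
Lemma OlamD x y : Olam x -> Olam y -> Olam (x + y).
Proof. by move=> [lx vx] [ly vy]; split; [apply: lamD | apply: mxvgeD]. Qed.
Lemma OlamN x : Olam x -> Olam (- x).
Proof. by move=> [lx vx]; split; [apply: lamN | apply: mxvgeN]. Qed.
Lemma OlamB x y : Olam x -> Olam y -> Olam (x - y).
Proof. by move=> ox /OlamN; apply: OlamD. Qed.
Lemma OlamM x y : Olam x -> Olam y -> Olam (x * y).
Proof.
by move=> [lx vx] [ly vy]; split; [apply: lamM | apply: (mxvgeM (m := 0) (n := 0))].
Qed.
Lemma OlamX x n : Olam x -> Olam (x ^+ n).
Proof.
by move=> ox; elim: n => [|n IH]; [rewrite expr0; apply: Olam1 | rewrite exprS; apply: OlamM].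
Qed.
Lemma OlamV x : Olam x -> x != 0 -> mxval x = 0 -> Olam x^-1.
Proof. by move=> [lx _] x0 vx; split; [apply: lamV | right; rewrite mxvalV // vx oppr0]. Qed.

Lemma mxvge1_ideal :
  is_ideal (int_closure v lam) (fun x => int_closure v lam x /\ mxvge 1 x).
Proof.
split=> [x []//||x y|x y].
- by split; [apply/int_closureE/Olam0 | left].
- move=> [/int_closureE ox vx] [/int_closureE oy vy]; split.
    exact/int_closureE/OlamB.
  exact: mxvgeD ox.1 (lamN oy.1) vx (mxvgeN vy).
move=> [/int_closureE [lx vx0] vx] /int_closureE [ly vy]; split; split.
- by apply/int_closureE/OlamM.
- by rewrite -[1]add0r; apply: mxvgeM.
- by apply/int_closureE/OlamM.
- by rewrite -[1]addr0; apply: mxvgeM.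
Qed.

Section Uniformizer.
Variable pi : 'M[K]_2.
Hypothesis hpi : uniformizer (int_closure v lam) pi.

Lemma Olam_uniformizer : Olam pi.
Proof. by case: hpi => /int_closureE. Qed.

Lemma uniformizer_ge1 : mxvge 1 pi.
Proof.
have [pi0|pi0] := eqVneq pi 0; first by left.
right; have vpi := Olam_val Olam_uniformizer pi0.
have [vpi0|] := eqVneq (mxval pi) 0; last by lia.
case: hpi => _ [_ [not1 _]]; exfalso; apply: not1.
exists pi^-1; last by rewrite mulrV ?lam_unit //; case: Olam_uniformizer.
by apply/int_closureE; apply: OlamV Olam_uniformizer pi0 vpi0.
Qed.

Lemma uniformizer_dvd x : Olam x -> mxvge 1 x -> exists2 y, Olam y & x = pi * y.
Proof.
move=> ox vx; have [_ [_ [_ hmax]]] := hpi.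
have pi_sub y : (exists2 z, int_closure v lam z & y = pi * z) ->
    int_closure v lam y /\ mxvge 1 y.
  move=> [z /int_closureE oz ->]; have opi := Olam_uniformizer.
  split; first exact/int_closureE/OlamM.
  by rewrite -[1]addr0; apply: mxvgeM opi.1 oz.1 uniformizer_ge1 oz.2.
case: (hmax _ mxvge1_ideal pi_sub) => [eqM | [_ [/eqP|]]].
- by have [z /int_closureE] := (eqM x).1 (conj (Olam_int_closure ox) vx); exists z.
- by rewrite oner_eq0.
- by rewrite mxval1.
Qed.

Lemma uniformizer_neq0 : pi != 0.
Proof.
case: hv => _ _ [c [c0 vc]].
have cM0 : c%:M != 0 :> 'M[K]_2 by rewrite -scalemx1 scaler_eq0 negb_or c0 oner_neq0.
have vc0 : vge v 0 c by right; rewrite vc.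
have vc1 : mxvge 1 c%:M by right; rewrite mxval_scalar // vc.
have [y _ cE] := uniformizer_dvd (conj (lam_scalar c) (mxvge_scalar vc0)) vc1.
by apply: contraNneq cM0 => pi0; rewrite cE pi0 mul0r.
Qed.

Lemma uniformizer_val : 1 <= mxval pi.
Proof. by case: uniformizer_ge1 => // /eqP; rewrite (negPf uniformizer_neq0). Qed.

Lemma Olam_factor x : Olam x -> x != 0 ->
  exists r e, [/\ x = pi ^+ r * e, Olam e, e != 0 & mxval e = 0].
Proof.
move=> ox x0; have [k vxk] : exists k : nat, mxval x <= k by exists `|mxval x|%N; lia.
elim: k x ox x0 vxk => [|k IH] x ox x0 vxk; have vx := Olam_val ox x0.
  by exists 0%N, x; rewrite expr0 mul1r; split=> //; lia.
have [vx0|vx0] := eqVneq (mxval x) 0; first by exists 0%N, x; rewrite expr0 mul1r.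
have vx1 : 1 <= mxval x by lia.
have [y oy xE] := uniformizer_dvd ox (or_intror vx1).
have y0 : y != 0 by apply: contraNneq x0 => y0; rewrite xE y0 mulr0.
have vy : mxval y <= k.
  have [lpi _] := Olam_uniformizer.
  move: vxk; rewrite xE mxvalM ?uniformizer_neq0 //; last exact: oy.1.
  by have := uniformizer_val; lia.
have [r [e [yE oe e0 ve]]] := IH y oy y0 vy.
by exists r.+1, e; rewrite xE yE exprS mulrA.
Qed.

End Uniformizer.

Lemma lam_bounded_principal (J : 'M[K]_2 -> Prop) (n0 : int) :
  (forall j, J j -> lam j) -> (exists j, J j /\ j != 0) -> (forall j, J j -> mxvge n0 j) ->
  exists j0, [/\ J j0, j0 != 0 & forall j, J j -> exists2 o, Olam o & j = o * j0].
Proof.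
move=> Jlam [j1 [J1 j10]] Jge.
pose P w := exists j, [/\ J j, j != 0 & mxval j = w].
have Pge w : P w -> n0 <= w.
  by move=> [j [Jj j0 <-]]; case: (Jge j Jj) => [jE|//]; rewrite jE eqxx in j0.
have [w [j0 [J0 j00 <-]] wmin] :=
  int_min_exists (ex_intro P _ (ex_intro _ j1 (And3 J1 j10 erefl))) Pge.
exists j0; split=> // j Jj; have [lj lj0] := (Jlam j Jj, Jlam j0 J0).
have [->|j0'] := eqVneq j 0; first by exists 0; [apply: Olam0 | rewrite mul0r].
exists (j * j0^-1); last by rewrite mulrVK ?lam_unit.
split; first exact: lamM lj (lamV lj0).
right; rewrite mxvalM ?mxvalV ?invr_eq0 //; last exact: lamV.
by have := wmin _ (ex_intro _ j (And3 Jj j0' erefl)); lia.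
Qed.

Lemma exists_notin_lam : exists u, ~ lam u.
Proof.
apply: NNPP => all_lam; have lamP x : lam x by apply: NNPP => nx; apply: all_lam; exists x.
have := lam_comm (lamP (delta_mx 0 1)) (lamP (delta_mx 1 0)).
rewrite -[_ * _]/(_ *m _) -[RHS]/(_ *m _) !mul_delta_mx => /matrixP /(_ 0 0).
by rewrite !mxE /= => /eqP; rewrite oner_eq0.
Qed.

Section Complement.
Variable u : 'M[K]_2.
Hypothesis lam_u : ~ lam u.

Lemma lam_u_indep m l : lam m -> lam l -> m + l * u = 0 -> m = 0 /\ l = 0.
Proof.
move=> lm ll mlu0; have [l0|l0] := eqVneq l 0.
  by move: mlu0; rewrite l0 mul0r addr0 => ->.
have luE : l * u = - m by apply/eqP; rewrite -addr_eq0 addrC mlu0.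
case: lam_u; rewrite -[u](mulKr (lam_unit ll l0)) luE.
exact: lamM (lamV ll) (lamN lm).
Qed.

Lemma lam_u_coord_inj m l m' l' : lam m -> lam l -> lam m' -> lam l' ->
  m + l * u = m' + l' * u -> m = m' /\ l = l'.
Proof.
move=> lm ll lm' ll' e.
have := @lam_u_indep (m - m') (l - l') (lamB lm lm') (lamB ll ll').
rewrite mulrBl addrACA -opprD e subrr => /(_ erefl) [/eqP + /eqP].
by rewrite !subr_eq0 => /eqP -> /eqP ->.
Qed.

(* [e1, e2, e1 u, e2 u] is free, hence a basis of the 4-dimensional [M_2(K)]. *)
Lemma lam_u_decomp x : exists m l, [/\ lam m, lam l & x = m + l * u].
Proof.
case: hlam => _ [_ _ _ _ [e1 [e2 [le1 le2 indep span]]]].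
pose X : 4.-tuple 'M[K]_2 := [tuple e1; e2; e1 * u; e2 * u].
have lin a b : lam (a *: e1 + b *: e2) by apply: lamD; apply: lamZ.
have XE k : \sum_(i < 4) k i *: X`_i =
    (k ord0 *: e1 + k (lift ord0 ord0) *: e2) +
    (k (lift ord0 (lift ord0 ord0)) *: e1 +
     k (lift ord0 (lift ord0 (lift ord0 ord0))) *: e2) * u.
  by rewrite !big_ord_recl big_ord0 /= addr0 mulrDl -!scalerAl !addrA.
have freeX : free X.
  apply/freeP => k; rewrite XE => /(lam_u_indep (lin _ _) (lin _ _)).
  move=> [/indep [k0 k1] /indep [k2 k3]].
  by case=> [[|[|[|[|//]]]] ?]; [rewrite -k0 | rewrite -k1 | rewrite -k2 | rewrite -k3];
    congr (k _); apply/val_inj.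
have spanX : <<X>>%VS = fullv.
  by apply/eqP; rewrite eqEdim subvf dimvf (eqP freeX).
have := coord_span (_ : x \in <<X>>%VS); rewrite spanX XE => /(_ (memvf x)) ->.
by do 2 eexists; split; last reflexivity; apply: lin.
Qed.

Definition ucoord_ge (n : int) x :=
  forall m l, lam m -> lam l -> x = m + l * u -> mxvge n m /\ mxvge n l.

Lemma ucoord_ge_le m n x : m <= n -> ucoord_ge n x -> ucoord_ge m x.
Proof. by move=> mn h a b la lb /(h a b la lb) [ha hb]; split; apply: mxvge_le mn _. Qed.

Lemma ucoord_ge0 n : ucoord_ge n 0.
Proof. by move=> m l lm ll /esym /(lam_u_indep lm ll) [-> ->]; split; left. Qed.

Lemma ucoord_geD n x y : ucoord_ge n x -> ucoord_ge n y -> ucoord_ge n (x + y).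
Proof.
move=> hx hy m l lm ll xyE.
have [m1 [l1 [lm1 ll1 xE]]] := lam_u_decomp x.
have [m2 [l2 [lm2 ll2 yE]]] := lam_u_decomp y.
have [vm1 vl1] := hx _ _ lm1 ll1 xE; have [vm2 vl2] := hy _ _ lm2 ll2 yE.
have e : (m1 + m2) + (l1 + l2) * u = m + l * u by rewrite -xyE mulrDl addrACA -xE -yE.
have [<- <-] := lam_u_coord_inj (lamD lm1 lm2) (lamD ll1 ll2) lm ll e.
by split; apply: mxvgeD.
Qed.

Lemma ucoord_geZ n a x : vge v 0 a -> ucoord_ge n x -> ucoord_ge n (a *: x).
Proof.
move=> va hx m l lm ll axE.
have [m1 [l1 [lm1 ll1 xE]]] := lam_u_decomp x.
have [vm1 vl1] := hx _ _ lm1 ll1 xE.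
have e : a%:M * m1 + a%:M * l1 * u = m + l * u.
  by rewrite -axE -mulrA -mulrDr -xE -mulmxE mul_scalar_mx.
have [<- <-] := lam_u_coord_inj (lamM (lam_scalar a) lm1) (lamM (lam_scalar a) ll1) lm ll e.
by split; rewrite -[n]add0r; apply: mxvgeM (lam_scalar a) _ (mxvge_scalar va) _.
Qed.

Lemma exists_ucoord_ge (s : seq 'M[K]_2) : exists n, forall x, x \in s -> ucoord_ge n x.
Proof.
elim: s => [|x s [n IH]]; first by exists 0.
have [m [l [lm ll xE]]] := lam_u_decomp x.
exists (Num.min n (Num.min (mxval m) (mxval l))) => y; rewrite inE => /predU1P [->|ys].
  move=> m' l' lm' ll' /(etrans (esym xE)) /(lam_u_coord_inj lm ll lm' ll') [<- <-].
  by split; right; rewrite !ge_min lexx ?orbT.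
by apply: ucoord_ge_le (IH y ys); rewrite ge_min lexx.
Qed.

Section Order.
Variable C : 'M[K]_2 -> Prop.
Hypotheses (hC : is_order v C) (intC : forall x, int_closure v lam x -> C x).

Lemma orderD x y : C x -> C y -> C (x + y).
Proof. by case: hC => _ + _ _ cx cy => /(_ x y cx cy) []. Qed.
Lemma orderM x y : C x -> C y -> C (x * y).
Proof. by case: hC => _ + _ _ cx cy => /(_ x y cx cy) [_ []]. Qed.
Lemma orderN x : C x -> C (- x).
Proof. by case: hC => _ + _ _ cx => /(_ x x cx cx) [_ []]. Qed.
Lemma order_Olam x : Olam x -> C x.
Proof. by move/Olam_int_closure; apply: intC. Qed.
Lemma orderX x n : C x -> C (x ^+ n).
Proof.
move=> cx; elim: n => [|n IH]; last by rewrite exprS; apply: orderM.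
by rewrite expr0; apply/order_Olam/Olam1.
Qed.

Lemma order_ucoord_bounded : exists n, forall x, C x -> ucoord_ge n x.
Proof.
case: hC => _ _ _ [s [_ spanC]]; have [n sn] := exists_ucoord_ge s.
exists n => x /spanC [c [vc ->]]; apply: big_ind; [exact: ucoord_ge0 | exact: ucoord_geD |].
by move=> i _; apply: ucoord_geZ (vc i) (sn _ (mem_nth _ (ltn_ord i))).
Qed.

(* The powers of [x] lie in [C], so their valuations [k * mxval x] are bounded below. *)
Lemma order_lam_Olam x : C x -> lam x -> Olam x.
Proof.
move=> cx lx; split=> //; have [->|x0] := eqVneq x 0; first by left.
right; rewrite leNgt; apply/negP => vx; have [n hn] := order_ucoord_bounded.
pose k := `|n|.+1.
have xkE : x ^+ k = x ^+ k + 0 * u by rewrite mul0r addr0.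
have [] := hn _ (orderX k cx) _ _ (lamX k lx) lam0 xkE.
case=> [/eqP|]; first by rewrite (negPf (lam_expf_neq0 k lx x0)).
rewrite mxvalX // -mulr_natr natz /k => + _; nia.
Qed.

Definition uideal l := lam l /\ exists2 m, lam m & C (m + l * u).

Lemma uidealMl o l : Olam o -> uideal l -> uideal (o * l).
Proof.
move=> oo [ll [m lm cm]]; split; first exact: lamM oo.1 ll.
exists (o * m); first exact: lamM oo.1 lm.
by rewrite -mulrA -mulrDr; apply: orderM (order_Olam oo) cm.
Qed.

Lemma uideal_bounded : exists n, forall l, uideal l -> mxvge n l.
Proof.
have [n hn] := order_ucoord_bounded.
by exists n => l [ll [m lm cm]]; have [] := hn _ cm m l lm ll erefl.
Qed.

End Order.

Lemma full_order_uideal C : is_full_order v C -> exists l, uideal C l /\ l != 0.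
Proof.
move=> [_ spanC]; apply: NNPP => uideal0; case: lam_u.
have lamC y : C y -> lam y.
  move=> cy; have [m [l [lm ll yE]]] := lam_u_decomp y.
  have [l0|l0] := eqVneq l 0; first by rewrite yE l0 mul0r addr0.
  by case: uideal0; exists l; do 2 split=> //; exists m; rewrite -?yE.
have [s [sC [c ->]]] := spanC u.
by apply: lam_sum => i _; apply/lamZ/lamC/sC/mem_nth.
Qed.

Section Suborder.
Variables B B' : 'M[K]_2 -> Prop.
Hypotheses (hB : is_order v B) (intB : forall x, int_closure v lam x -> B x).
Hypotheses (hB' : is_full_order v B') (B'B : forall x, B' x -> B x).
Hypothesis intB' : forall x, int_closure v lam x -> B' x.

Lemma uideal_sub l : uideal B' l -> uideal B l.
Proof. by move=> [ll [m lm /B'B cm]]; split=> //; exists m. Qed.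

(* Both ideals are principal; their generators differ by a power of [pi] up to a unit. *)
Lemma suborder_uideal_scaled pi : uniformizer (int_closure v lam) pi ->
  exists r : nat, forall l, uideal B' l <-> exists2 j, uideal B j & l = pi ^+ r * j.
Proof.
move=> hpi; have [n bdB] := uideal_bounded hB.
have [l1 [B'l1 l10]] := full_order_uideal hB'.
have [j0 [Bj0 j00 genB]] := @lam_bounded_principal (uideal B) n (fun l h => h.1)
  (ex_intro _ l1 (conj (uideal_sub B'l1) l10)) bdB.
have [j1 [B'j1 j10 genB']] := @lam_bounded_principal (uideal B') n (fun l h => h.1)
  (ex_intro _ l1 (conj B'l1 l10)) (fun l h => bdB l (uideal_sub h)).
have [o oo j1E] := genB j1 (uideal_sub B'j1).
have o0 : o != 0 by apply: contraNneq j10 => o0; rewrite j1E o0 mul0r.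
have [r [e [oE oe e0 ve]]] := Olam_factor hpi oo o0.
have lpr : lam (pi ^+ r) by apply/lamX; case: (Olam_uniformizer hpi).
exists r => l; split.
  move=> /genB' [o' oo' ->]; exists (o' * e * j0).
    exact: (uidealMl hB intB (OlamM oo' oe) Bj0).
  by rewrite j1E oE !mulrA (lam_comm oo'.1 lpr).
move=> [j /genB [o'' oo'' ->] ->].
have -> : pi ^+ r * (o'' * j0) = o'' * e^-1 * j1.
  rewrite j1E oE (lam_comm lpr oe.1) -!mulrA mulKr ?lam_unit //; last by case: oe.
  by rewrite !mulrA (lam_comm oo''.1 lpr).
exact: (uidealMl hB'.1 intB' (OlamM oo'' (OlamV oe e0 ve)) B'j1).
Qed.

Lemma suborder_decomp P : Olam P ->
  (forall l, uideal B' l <-> exists2 j, uideal B j & l = P * j) ->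
  forall x, B' x <-> exists o b, [/\ int_closure v lam o, B b & x = o + P * b].
Proof.
move=> oP scaled x; have BP := order_Olam intB oP.
have [m [l [lm ll xE]]] := lam_u_decomp x.
split=> [B'x | [o [b [/int_closureE oo Bb ->]]]].
  have B'ml : B' (m + l * u) by rewrite -xE.
  have [j [lj [m0 lm0 Bb]] lE] := (scaled l).1 (conj ll (ex_intro2 _ _ m lm B'ml)).
  exists (x - P * (m0 + j * u)), (m0 + j * u); split=> //; last by rewrite subrK.
  apply/int_closureE/(order_lam_Olam hB intB).
    exact: (orderD hB (B'B B'x) (orderN hB (orderM hB BP Bb))).
  rewrite xE lE mulrDr mulrA [P * m0 + _]addrC addrKA.
  exact: lamB lm (lamM oP.1 lm0).
have [m1 [j [lm1 lj bE]]] := lam_u_decomp b.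
have Bmj : B (m1 + j * u) by rewrite -bE.
have [_ [m' lm' B'y]] :=
  (scaled (P * j)).2 (ex_intro2 _ _ j (conj lj (ex_intro2 _ _ m1 lm1 Bmj)) erefl).
have xE' : o + P * b = (o + P * m1 - m') + (m' + P * j * u).
  by rewrite addrA subrK bE mulrDr mulrA addrA.
rewrite xE'; apply: (orderD hB'.1 _ B'y); apply/intB'/int_closureE/(order_lam_Olam hB intB).
  rewrite -[_ - _](addrK (m' + P * j * u)) -xE'.
  have Bo := order_Olam intB oo.
  exact: (orderD hB (orderD hB Bo (orderM hB BP Bb)) (orderN hB (B'B B'y))).
exact: lamB (lamD oo.1 (lamM oP.1 lm1)) lm'.
Qed.

End Suborder.

End Complement.

End QuadraticSubfield.

Theorem lemma5p1 (K : fieldType) (v : K -> int) (lam : 'M[K]_2 -> Prop)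
    (pi : 'M[K]_2) (B : 'M[K]_2 -> Prop) :
  nonarch_local_field v ->
  quadratic_subfield lam ->
  uniformizer (int_closure v lam) pi ->
  is_full_order v B ->
  (forall x, int_closure v lam x -> B x) ->
  forall B' : 'M[K]_2 -> Prop,
    is_full_order v B' ->
    (forall x, B' x -> B x) ->
    (forall x, int_closure v lam x -> B' x) ->
    exists r : nat, forall x, B' x <->
      exists o b, [/\ int_closure v lam o, B b & x = o + pi ^+ r * b].
Proof.
move=> [hv hc _] hlam hpi [hB _] intB B' hB' B'B intB'.
have [u lam_u] := exists_notin_lam hlam.
have [r scaled] := suborder_uideal_scaled hv hc hlam lam_u hB intB hB' B'B intB' hpi.
exists r; apply: (suborder_decomp hv hc hlam lam_u hB intB hB' B'B intB' _ scaled).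
exact/OlamX/(Olam_uniformizer hv hc hlam hpi).
Qed.
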